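(* Consider the sampling-based safety filter described in the context at time $t$. Let $\epsilon\in(0,1)$ and $\beta\in(0,1)$, and let the number of samples $N$ satisfy $$N\ge\frac{2}{\epsilon}\left(\ln\frac{1}{\beta}+1\right).$$ If the filter intervenes at time $t$ (i.e. $\mathbf{u}^{\mathrm{safe}}_t\ne\mathbf{u}^{\mathrm{nom}}_t$, meaning $\min_i C(\tau^i_{t+1})\ge0$), then, with probability at least $1-\beta$ over the draw of the $N$ i.i.d. samples, the probability that a control sequence $U_{t+1}\sim\tilde q_{t+1}$ yields a safe trajectory from $\mathbf{x}_{t+1}=f(\mathbf{x}_t,\mathbf{u}^{\mathrm{nom}}_t)$ is at most $\epsilon$: $$\Pr_{U_{t+1}\sim\tilde q_{t+1}}\left(\mathcal{O}_{\tau_{t+1}}=1\right)\le\epsilon.$$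
   Context: Consider a deterministic discrete-time system $\mathbf{x}_{t+1}=f(\mathbf{x}_t,\mathbf{u}_t)$ with states $\mathbf{x}_t\in\mathcal{X}$ and inputs $\mathbf{u}_t\in\mathcal{U}$. Let $l:\mathcal{X}\to\mathbb{R}$ be a level function and $\mathcal{L}=\{\mathbf{x}: l(\mathbf{x})\le 0\}$ the failure set. Fix a horizon $H\ge1$. For a state $\mathbf{x}$ and $U=(\mathbf{u}_0,\dots,\mathbf{u}_{H-1})\in\mathcal{U}^H$, the rollout is $\mathbf{x}^U_0=\mathbf{x}$, $\mathbf{x}^U_{k+1}=f(\mathbf{x}^U_k,\mathbf{u}_k)$, giving trajectory $\tau$. The safety indicator is $\mathcal{O}_\tau=1$ if $\mathbf{x}^U_k\notin\mathcal{L}$ for all $k\in\{0,\dots,H\}$ and $0$ otherwise; the cost is $C(\tau)=\max_{k\in\{0,\dots,H\}}\{-l(\mathbf{x}^U_k)\}$. For $U_{t+1}\in\mathcal{U}^H$, $\tau_{t+1}$ denotes its rollout from $\mathbf{x}_{t+1}=f(\mathbf{x}_t,\mathbf{u}^{\mathrm{nom}}_t)$. Safety filter at time $t$: given the current state $\mathbf{x}_t$, a nominal input $\mathbf{u}^{\mathrm{nom}}_t\in\mathcal{U}$ and a stored sequence $U^{\mathrm{safe}}_t=(\bar{\mathbf{u}}_t,\dots,\bar{\mathbf{u}}_{t+H-1})$, it computes $\mathbf{x}_{t+1}=f(\mathbf{x}_t,\mathbf{u}^{\mathrm{nom}}_t)$, draws $N$ control sequences $U^1_{t+1},\dots,U^N_{t+1}$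 independently from a sampling distribution $\tilde q_{t+1}$ on $\mathcal{U}^H$ (fixed before the draw), rolls each out from $\mathbf{x}_{t+1}$ to get $\tau^i_{t+1}$, and lets $i^*\in\arg\min_i C(\tau^i_{t+1})$. If $C(\tau^{i^*}_{t+1})<0$ it outputs $\mathbf{u}^{\mathrm{safe}}_t=\mathbf{u}^{\mathrm{nom}}_t$ and stores $U^{i^*}_{t+1}$; otherwise the filter intervenes, outputting $\mathbf{u}^{\mathrm{safe}}_t=\bar{\mathbf{u}}_t$ and storing the shifted sequence $(\bar{\mathbf{u}}_{t+1},\dots,\bar{\mathbf{u}}_{t+H-1},\mathbf{u}')$ for some appended input $\mathbf{u}'$. The notation $\mathbf{u}^{\mathrm{safe}}_t\ne\mathbf{u}^{\mathrm{nom}}_t$ means the filter intervenes. *)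

From HB Require Import structures.
From mathcomp Require Import all_boot all_order all_algebra.
From mathcomp Require Import all_classical all_reals all_analysis.
Set Implicit Arguments. Unset Strict Implicit. Unset Printing Implicit Defensive.
Import Order.TTheory GRing.Theory Num.Theory.
Local Open Scope ring_scope.

Section SafetyFilter.
Variables (R : realType) (X U : Type).
Variables (f : X -> U -> X) (l : X -> R).

Definition rollout_states (x : X) (us : seq U) : seq X := x :: scanl f x us.

Definition traj_cost (x : X) (us : seq U) : R :=
  \big[Num.max/(- l x)]_(y <- scanl f x us) (- l y).

(* Safety indicator O_tau = 1 iff no state of the rollout lies in the failure
   set L = {x | l x <= 0}, i.e. l (x^U_k) > 0 for all k in {0..H}. *)
Definition traj_safe (x : X) (us : seq U) : bool :=
  all (fun y => 0 < l y) (rollout_states x us).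

(* The filter intervenes at time t (u^safe_t <> u^nom_t) iff the best sampled
   cost min_i C(tau^i_{t+1}) is >= 0, i.e. every sampled cost is >= 0. *)
Definition filter_intervenes (N : nat) (x_next : X) (samples : 'I_N -> seq U) : Prop :=
  forall i : 'I_N, 0 <= traj_cost x_next (samples i).

End SafetyFilter.

From HB Require Import structures.
From mathcomp Require Import all_boot all_order all_algebra.
From mathcomp Require Import all_classical all_reals all_analysis.
From mathcomp Require Import ring lra.
Set Implicit Arguments. Unset Strict Implicit. Unset Printing Implicit Defensive.
Import Order.TTheory GRing.Theory Num.Theory.
Local Open Scope classical_set_scope.
Local Open Scope ring_scope.

(* If the safe set has probability p > eps under q, the filter intervenes only
   when all N independent samples miss it, which happens with probability
   (1 - p)^N <= exp(-eps N) <= beta.  The sample-size hypothesis gives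
   eps N >= ln (1/beta) with room to spare. *)

Lemma bigmax_seq_lt (R : realDomainType) (T : Type) (a b : R) (g : T -> R)
    (s : seq T) :
  (\big[Num.max/a]_(y <- s) g y < b) = (a < b) && all (fun y => g y < b) s.
Proof.
elim: s => [|y s IH]; first by rewrite big_nil andbT.
by rewrite big_cons gt_max IH /= andbCA.
Qed.

Section Trajectories.
Variables (R : realType) (X U : Type) (f : X -> U -> X) (l : X -> R).

Lemma traj_cost_ge0 (x : X) (us : seq U) :
  (0 <= traj_cost f l x us) = ~~ traj_safe f l x us.
Proof.
rewrite /traj_cost /traj_safe /rollout_states leNgt bigmax_seq_lt /= oppr_lt0.
by congr (~~ (_ && _)); apply: eq_all => y; rewrite oppr_lt0.
Qed.

Lemma filter_intervenesP (N : nat) (x : X) (samples : 'I_N -> seq U) :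
  filter_intervenes f l x samples <-> forall i, ~ traj_safe f l x (samples i).
Proof.
split=> h i; first by apply/negP; rewrite -traj_cost_ge0.
by rewrite traj_cost_ge0; apply/negP.
Qed.

End Trajectories.

Lemma fine_probability_setC (R : realType) (d : measure_display)
    (T : measurableType d) (mu : probability T R) (A : set T) :
  measurable A -> fine (mu (~` A)) = 1 - fine (mu A).
Proof. by move=> mA; rewrite probability_setC // fineB // fin_num_measure. Qed.

Section IIDSamples.
Variables (R : realType) (dT : measure_display) (T : measurableType dT).
Variable q : probability T R.
Variables (dO : measure_display) (Omega : measurableType dO).
Variable P : probability Omega R.
Variables (N : nat) (Us : 'I_N -> Omega -> T).
Hypothesis Us_law : forall i A, measurable A -> P (Us i @^-1` A) = q A.
Hypothesis Us_indep : forall A : 'I_N -> set T, (forall i, measurable (A i)) ->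
  P (\bigcap_(i in [set: 'I_N]) (Us i @^-1` A i)) =
    (\prod_(i < N) P (Us i @^-1` A i))%E.

Lemma probability_all_samples_in (A : set T) : measurable A ->
  P (\bigcap_(i in [set: 'I_N]) (Us i @^-1` A)) = (fine (q A) ^+ N)%:E.
Proof.
move=> mA; rewrite Us_indep //.
under eq_bigr do rewrite Us_law // -[q A]fineK ?fin_num_measure //.
by rewrite prodEFin prodr_const card_ord.
Qed.

End IIDSamples.

Lemma pow_subr_le_expR (R : realType) (p : R) (n : nat) :
  p <= 1 -> (1 - p) ^+ n <= expR (- (p * n%:R)).
Proof.
move=> hp1; rewrite -mulNr expRM_natr.
apply: lerXn2r; rewrite ?nnegrE ?expR_ge0 ?subr_ge0 //.
by have := expR_ge1Dx (- p); lra.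
Qed.

Lemma expR_neg_le (R : realType) (beta x : R) :
  0 < beta -> ln (1 / beta) <= x -> expR (- x) <= beta.
Proof.
move=> hbeta hx; rewrite -{1}(lnK (x:=beta)) ?posrE // ler_expR.
by rewrite div1r lnV ?posrE // in hx; lra.
Qed.

Lemma sample_size_ge_ln (R : realType) (eps beta : R) (N : nat) :
  0 < eps -> 0 < beta < 1 -> 2 / eps * (ln (1 / beta) + 1) <= N%:R ->
  ln (1 / beta) <= eps * N%:R.
Proof.
move=> heps /andP[hbeta0 hbeta1] hN.
have hL : 0 < ln (1 / beta).
  by rewrite div1r lnV ?posrE // oppr_gt0 ln_lt0 // hbeta0.
have e : eps * (2 / eps * (ln (1 / beta) + 1)) = 2 * (ln (1 / beta) + 1).
  by field; rewrite gt_eqF.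
have : eps * (2 / eps * (ln (1 / beta) + 1)) <= eps * N%:R by rewrite ler_pM2l.
by rewrite e; lra.
Qed.

Lemma pow_subr_le (R : realType) (eps beta p : R) (N : nat) :
  0 < beta -> eps < p <= 1 -> ln (1 / beta) <= eps * N%:R ->
  (1 - p) ^+ N <= beta.
Proof.
move=> hbeta /andP[eps_lt_p p_le1] hN.
apply: le_trans (pow_subr_le_expR N p_le1) _.
apply: le_trans (expR_neg_le hbeta hN).
by rewrite ler_expR lerN2 ler_wpM2r // ltW.
Qed.

Theorem theorem1
  (R : realType) (X : Type) (dU : measure_display) (U : measurableType dU)
  (f : X -> U -> X) (l : X -> R) (H : nat) (hH : (1 <= H)%N)
  (x_t : X) (u_nom : U)
  (q : probability (H.-tuple U) R)
  (hsafe_meas : measurable [set us : H.-tuple U | traj_safe f l (f x_t u_nom) us])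
  (eps beta : R) (heps0 : 0 < eps) (heps1 : eps < 1)
  (hbeta0 : 0 < beta) (hbeta1 : beta < 1)
  (N : nat) (hN : 2 / eps * (ln (1 / beta) + 1) <= N%:R)
  (dO : measure_display) (Omega : measurableType dO) (P : probability Omega R)
  (Us : 'I_N -> Omega -> H.-tuple U)
  (hUs_meas : forall i, measurable_fun setT (Us i))
  (hUs_law : forall i (A : set (H.-tuple U)), measurable A ->
     P (Us i @^-1` A) = q A)
  (hUs_indep : forall A : 'I_N -> set (H.-tuple U),
     (forall i, measurable (A i)) ->
     P (\bigcap_(i in [set: 'I_N]) (Us i @^-1` A i)) =
       (\prod_(i < N) P (Us i @^-1` A i))%E) :
  ((1 - beta)%:E <=
    P [set w : Omega |
         filter_intervenes f l (f x_t u_nom) (fun i => tval (Us i w)) ->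
         (q [set us : H.-tuple U | traj_safe f l (f x_t u_nom) us] <= eps%:E)%E])%E.
Proof.
set S := [set us : H.-tuple U | _].
(* [leP] also rewrites the conclusion [q S <= eps] of the event to true/false. *)
have [qS_le_eps|eps_lt_qS] := leP (q S) eps%:E.
  rewrite (_ : [set w | _] = setT); last by apply/seteqP; split=> w // _ _.
  by rewrite probability_setT lee_fin; lra.
have mSC : measurable (~` S) by exact: measurableC.
have mUsSC i : measurable (Us i @^-1` ~` S).
  by have := hUs_meas i measurableT _ mSC; rewrite setTI.
set B := \bigcap_(i in [set: 'I_N]) (Us i @^-1` ~` S).
rewrite (_ : [set w | _] = ~` B); last first.
  apply/seteqP; split=> w /= h.
  - by move=> hB; have /h := (filter_intervenesP _ _ _ _).2 (fun i => hB i I).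
  - by move=> /filter_intervenesP hFI; case: h => i _; exact: hFI.
have mB : measurable B by apply: fin_bigcap_measurable.
rewrite probability_setC // (probability_all_samples_in hUs_law) //.
rewrite fine_probability_setC // -EFinB lee_fin lerD2l lerN2.
have hbeta : 0 < beta < 1 by rewrite hbeta0 hbeta1.
apply: pow_subr_le hbeta0 _ (sample_size_ge_ln heps0 hbeta hN).
rewrite -lte_fin -lee_fin fineK ?fin_num_measure // eps_lt_qS.
exact: probability_le1.
Qed.
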